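(* Let $A\in\mathbb{R}^{n\times n}$, $B\in\mathbb{R}^n$, $n\ge2$. For $k=1,\dots,n-1$ let $\mathrm{an}_k\in\mathbb{R}^{(n-k)\times(n-k+1)}$ have full row rank $n-k$, and set $M_k=\mathrm{an}_k\mathrm{an}_{k-1}\cdots\mathrm{an}_1\in\mathbb{R}^{(n-k)\times n}$, $B_0=B$, $B_k=M_kA^kB$; assume $\mathrm{an}_kB_{k-1}=0$ for each $k$ (equivalently $M_kA^{k-1}B=0$). If $(A,B)$ is controllable, then for every $k=0,1,\dots,n-1$ the vectors $M_kA^kB,\,M_kA^{k+1}B,\dots,M_kA^{n-1}B$ (with $M_0=I_n$) are linearly independent, i.e. span a space of dimension $n-k$; in particular $B_k\neq0$ for all $k$. Equivalently, if $B_k=0$ for some $k$, then $\operatorname{rank}(B\;AB\;\cdots\;A^{n-1}B)<n$.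
   Context: $(A,B)$ controllable means the controllability matrix $(B\;AB\;\cdots\;A^{n-1}B)$ has rank $n$. *)

From HB Require Import structures.
From mathcomp Require Import all_boot all_order all_algebra.
From mathcomp Require Import all_reals.
Set Implicit Arguments. Unset Strict Implicit. Unset Printing Implicit Defensive.
Import Order.TTheory GRing.Theory Num.Theory.
Local Open Scope ring_scope.

Definition ctrbmx (R : pzRingType) (n : nat) (A : 'M[R]_n) (B : 'cV[R]_n)
  : 'M[R]_(n, n) := \matrix_(i < n, j < n) (A ^+ j *m B) i ord0.

Definition controllable (R : fieldType) (n : nat) (A : 'M[R]_n) (B : 'cV[R]_n)
  : bool := \rank (ctrbmx A B) == n.

(* an k (k = 0, ..., n-2) represents the paper's an_{k+1},
   of size (n-(k+1)) x (n-k).  Mk an k is the paper's M_k = an_k ... an_1,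
   of size (n-k) x n, with M_0 = I_n. *)
Fixpoint Mk (R : pzRingType) (n : nat)
  (an : forall k : nat, 'M[R]_(n - k.+1, n - k)) (k : nat) : 'M[R]_(n - k, n) :=
  match k with
  | 0 => castmx (esym (subn0 n), erefl n) (1%:M : 'M[R]_n)
  | k'.+1 => an k' *m Mk an k'
  end.

Definition Bk (R : pzRingType) (n : nat) (A : 'M[R]_n) (B : 'cV[R]_n)
  (an : forall k : nat, 'M[R]_(n - k.+1, n - k)) (k : nat) : 'cV[R]_(n - k) :=
  Mk an k *m (A ^+ k *m B).

Definition reduced_ctrbmx (R : pzRingType) (n : nat) (A : 'M[R]_n) (B : 'cV[R]_n)
  (an : forall k : nat, 'M[R]_(n - k.+1, n - k)) (k : nat) : 'M[R]_(n - k, n - k) :=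
  \matrix_(i < n - k, j < n - k) (Mk an k *m (A ^+ (k + j) *m B)) i ord0.

From HB Require Import structures.
From mathcomp Require Import all_boot all_order all_algebra.
From mathcomp Require Import all_reals.
From mathcomp Require Import zify.
Import Order.TTheory GRing.Theory Num.Theory.
Local Open Scope ring_scope.

(* Write C_k for the reduced controllability matrix of step k.  Column 0 of
   [an_k C_k] is [an_k B_k = 0], and column j+1 is column j of C_(k+1); so the
   column space of [an_k C_k] lies in that of C_(k+1).  As [an_k] has full row
   rank [n-k-1] and, inductively, C_k is invertible, [an_k C_k] has rank
   [n-k-1], which forces C_(k+1) to be invertible too.  The first column
   [B_k] of an invertible C_k cannot vanish. *)

Lemma mxrank_castmx (F : fieldType) m n m' n' (e : (m = m') * (n = n'))
    (M : 'M[F]_(m, n)) :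
  \rank (castmx e M) = \rank M.
Proof. by case: e => em en; case: m' / em; case: n' / en; rewrite castmx_id. Qed.

Lemma mul_cast1mx (R : pzRingType) m n p (e : m = n) (M : 'M[R]_(m, p)) :
  castmx (e, erefl m) 1%:M *m M = castmx (e, erefl p) M.
Proof. by case: n / e; rewrite !castmx_id mul1mx. Qed.

Lemma col_mulmx (R : pzRingType) m n p (M : 'M[R]_(m, n)) (N : 'M[R]_(n, p)) j :
  col j (M *m N) = M *m col j N.
Proof. by apply/colP => i; rewrite !mxE; apply: eq_bigr => l _; rewrite mxE. Qed.

Lemma col_neq0_rank_full (F : fieldType) m n (M : 'M[F]_(m, n)) :
  \rank M = n -> forall j, col j M != 0.
Proof.
move=> rkM j; have freeMT : row_free M^T by rewrite /row_free mxrank_tr rkM.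
rewrite -(inj_eq (@trmx_inj _ _ _)) tr_col trmx0 rowE mulmx_free_eq0 //.
by apply/eqP => /matrixP/(_ 0 j); rewrite !mxE !eqxx => /eqP; rewrite oner_eq0.
Qed.

Section ReducedControllability.

Variables (F : fieldType) (n : nat) (A : 'M[F]_n) (B : 'cV[F]_n).
Variable an : forall k : nat, 'M[F]_(n - k.+1, n - k).

Local Notation C := (reduced_ctrbmx A B an).

Lemma col_reduced_ctrbmx k (j : 'I_(n - k)) :
  col j (C k) = Mk an k *m (A ^+ (k + j) *m B).
Proof. by apply/colP => i; rewrite !mxE. Qed.

Lemma reduced_ctrbmx0 : C 0 = castmx (esym (subn0 n), esym (subn0 n)) (ctrbmx A B).
Proof.
apply/matrixP => i j; rewrite castmxE [LHS]mxE /= mul_cast1mx castmxE [RHS]mxE.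
by congr (_ _ _); apply: val_inj.
Qed.

Lemma rank_reduced_ctrbmx0 : controllable A B -> \rank (C 0) = n.
Proof. by move/eqP; rewrite reduced_ctrbmx0 mxrank_castmx. Qed.

Lemma col_an_reduced_ctrbmx_sub k (j : 'I_(n - k)) :
  an k *m Bk A B an k = 0 -> ((col j (an k *m C k))^T <= (C k.+1)^T)%MS.
Proof.
move=> anBk0; rewrite col_mulmx col_reduced_ctrbmx.
case: j => [[|j] lt_j_nk] /=; first by rewrite addn0 anBk0 trmx0 sub0mx.
have lt_j_nk1 : (j < n - k.+1)%N by lia.
have -> : an k *m (Mk an k *m (A ^+ (k + j.+1) *m B)) = col (Ordinal lt_j_nk1) (C k.+1).
  by rewrite col_reduced_ctrbmx /= !mulmxA addSn addnS.
by rewrite tr_col row_sub.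
Qed.

Lemma rank_an_reduced_ctrbmx k :
  an k *m Bk A B an k = 0 -> (\rank (an k *m C k) <= \rank (C k.+1))%N.
Proof.
move=> anBk0; rewrite -mxrank_tr -[X in (_ <= X)%N]mxrank_tr.
apply: mxrankS; apply/row_subP => j; rewrite -tr_col.
exact: col_an_reduced_ctrbmx_sub.
Qed.

Lemma rank_reduced_ctrbmxS k :
  row_free (an k) -> an k *m Bk A B an k = 0 ->
  \rank (C k) = (n - k)%N -> \rank (C k.+1) = (n - k.+1)%N.
Proof.
move=> free_an anBk0 rkCk; apply/eqP; rewrite eqn_leq rank_leq_row /=.
have free_Ck : row_free (C k) by rewrite /row_free rkCk.
have rk_anCk : \rank (an k *m C k) = (n - k.+1)%N.
  by rewrite mxrankMfree // (eqP free_an).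
by rewrite -[X in (X <= _)%N]rk_anCk rank_an_reduced_ctrbmx.
Qed.

Lemma rank_reduced_ctrbmx :
  (forall k, (k < n.-1)%N -> row_free (an k)) ->
  (forall k, (k < n.-1)%N -> an k *m Bk A B an k = 0) ->
  controllable A B ->
  forall k, (k < n)%N -> \rank (C k) = (n - k)%N.
Proof.
move=> free_an anBk0 ctrlAB; elim=> [_ | k IHk lt_k1_n].
  by rewrite rank_reduced_ctrbmx0 ?subn0.
have lt_k_n1 : (k < n.-1)%N by lia.
by apply: rank_reduced_ctrbmxS; [exact: free_an | exact: anBk0 | apply: IHk; lia].
Qed.

Lemma Bk_neq0_rank_full k :
  (k < n)%N -> \rank (C k) = (n - k)%N -> Bk A B an k != 0.
Proof.
rewrite -subn_gt0 => nk_gt0 /col_neq0_rank_full/(_ (Ordinal nk_gt0)).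
by rewrite col_reduced_ctrbmx addn0.
Qed.

End ReducedControllability.

Theorem mainTheorem12 (R : realType) (n : nat) (A : 'M[R]_n) (B : 'cV[R]_n)
  (an : forall k : nat, 'M[R]_(n - k.+1, n - k)) :
  (2 <= n)%N ->
  (forall k : nat, (k < n.-1)%N -> row_free (an k)) ->
  (forall k : nat, (k < n.-1)%N -> an k *m Bk A B an k = 0) ->
  controllable A B ->
  forall k : nat, (k < n)%N ->
    \rank (reduced_ctrbmx A B an k) = (n - k)%N /\ Bk A B an k != 0.
Proof.
move=> _ free_an anBk0 ctrlAB k lt_k_n.
have rkCk : \rank (reduced_ctrbmx A B an k) = (n - k)%N.
  exact: rank_reduced_ctrbmx.
by split=> //; apply: Bk_neq0_rank_full.
Qed.
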